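(* Let $\prec$ be a coherent contextual order on $\widetilde{\Sigma}=\widetilde{\Sigma}_1\uplus\widetilde{\Sigma}_2$ (with $\widetilde{\Sigma}_1,\widetilde{\Sigma}_2$ disjoint visibly pushdown alphabets) and let $P_1,P_2$ be well-matched visibly pushdown languages over $\widetilde{\Sigma}_1,\widetilde{\Sigma}_2$ respectively. Then $\mathrm{red}_\prec(P_1\parallel P_2)\subseteq\mathsf{wn}(P_1\parallel P_2)$.
   Context: A visibly pushdown (VP) alphabet is a finite alphabet partitioned into calls $\Sigma^{\mathsf{call}}$, returns $\Sigma^{\mathsf{ret}}$ and internals $\Sigma^{\mathsf{int}}$; write $\Sigma^{\mathsf{call}}_i,\Sigma^{\mathsf{ret}}_i$ for those of $\widetilde{\Sigma}_i$. Calls and returns in a word are matched like opening and closing parentheses (internals ignored); unmatched calls/returns are pending; a word is well-matched if none are pending. A visibly pushdown language is one accepted by a visibly pushdown automaton (pushes one symbol on each call, pops on each return, stack unchanged on internals). Shuffle: $P_1\parallel P_2=\{w\in\widetilde{\Sigma}^*:\Pi_{\widetilde{\Sigma}_i}(w)\in P_i\}$ with $\Pi_{\widetilde{\Sigma}_i}$ erasing letters outside $\widetilde{\Sigma}_i$. A word is well-nested if every matched call–return pair consists of letters from the same $\widetilde{\Sigma}_k$; $\mathsf{wn}(L)$ is the set of well-nested words of $L$. $\mathbb{I}=\{(a,b):a\in\widetilde{\Sigma}_i,b\in\widetilde{\Sigma}_j,i\ne j\}$, $\equiv_{\mathbb{I}}$ the least reflexive transitive relation with $uabv\equiv_{\mathbb{I}}ubav$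 for $(a,b)\in\mathbb{I}$. A contextual order is a map $\prec$ from $\widetilde{\Sigma}^*$ to strict total orders on $\widetilde{\Sigma}$; it induces $\preceq$: $\sigma\preceq\rho$ iff $\sigma$ is a prefix of $\rho$ or $\sigma=\alpha a\beta$, $\rho=\alpha b\gamma$ with $a\prec_\alpha b$. $\mathrm{red}_\prec(L)=\{w\in L:\forall u\in L,(u\equiv_{\mathbb{I}}w\wedge u\preceq w)\Rightarrow u=w\}$. A contextual order $\prec$ is coherent if for every $u\in\widetilde{\Sigma}^*$ and $i\in\{1,2\}$: if $u$ has pending calls and the last pending call of $u$ is in $\Sigma^{\mathsf{call}}_i$, then $a\prec_u r$ for every $a\in\widetilde{\Sigma}_i$ and every $r\in\bigcup_{j\ne i}\Sigma^{\mathsf{ret}}_j$. *)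

From mathcomp Require Import all_boot.
Set Implicit Arguments. Unset Strict Implicit. Unset Printing Implicit Defensive.

Inductive letter_kind := Call | Ret | Int.

Definition is_call (k : letter_kind) : bool := if k is Call then true else false.
Definition is_ret (k : letter_kind) : bool := if k is Ret then true else false.

Section Words.
Variables (S : finType) (kind : S -> letter_kind).

Fixpoint wm_from (d : nat) (w : seq S) : bool :=
  match w with
  | [::] => d == 0
  | a :: w' =>
    match kind a with
    | Call => wm_from d.+1 w'
    | Ret => (0 < d) && wm_from d.-1 w'
    | Int => wm_from d w'
    end
  end.

Definition well_matched (w : seq S) : bool := wm_from 0 w.

(** In u = p ++ c :: s, the call c is pending: no return of s matches it
    (a return b of s = v ++ b :: x matches c iff v is well-matched). *)
Definition pending_call_at (p : seq S) (c : S) (s : seq S) : Prop :=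
  is_call (kind c) /\
  ~ (exists v b x, s = v ++ b :: x /\ is_ret (kind b) /\ well_matched v).

Definition last_pending_call (u : seq S) (c : S) : Prop :=
  exists p s, u = p ++ c :: s /\ pending_call_at p c s /\
    (forall p' c' s', s = p' ++ c' :: s' -> ~ pending_call_at (p ++ c :: p') c' s').

(** Visibly pushdown automata (with pops on the empty stack allowed,
    None = bottom of stack) and visibly pushdown languages. *)
Record vpa := VPA {
  vQ : finType;
  vG : finType;
  vinit : pred vQ;
  vfinal : pred vQ;
  vcall : vQ -> S -> vQ -> vG -> bool;
  vret : vQ -> S -> option vG -> vQ -> bool;
  vint : vQ -> S -> vQ -> bool
}.

Fixpoint vpa_acc (A : vpa) (q : vQ A) (st : seq (vG A)) (w : seq S) : Prop :=
  match w with
  | [::] => vfinal q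
  | a :: w' =>
    match kind a with
    | Call => exists q' g, vcall q a q' g /\ vpa_acc q' (g :: st) w'
    | Ret =>
      match st with
      | [::] => exists q', vret q a None q' /\ vpa_acc q' [::] w'
      | g :: st' => exists q', vret q a (Some g) q' /\ vpa_acc q' st' w'
      end
    | Int => exists q', vint q a q' /\ vpa_acc q' st w'
    end
  end.

Definition vpa_accepts (A : vpa) (w : seq S) : Prop :=
  exists q0 : vQ A, vinit q0 /\ vpa_acc q0 [::] w.

Definition is_VPL (L : seq S -> Prop) : Prop :=
  exists A : vpa, forall w, L w <-> vpa_accepts A w.

End Words.

Section Shuffle.
Variables (S1 S2 : finType) (k1 : S1 -> letter_kind) (k2 : S2 -> letter_kind).

Definition Sig := (S1 + S2)%type.

Definition skind (a : Sig) : letter_kind :=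
  match a with inl x => k1 x | inr y => k2 y end.

Definition side (a : Sig) : bool := if a is inl _ then true else false.

Definition proj1w (w : seq Sig) : seq S1 :=
  pmap (fun a => if a is inl x then Some x else None) w.
Definition proj2w (w : seq Sig) : seq S2 :=
  pmap (fun a => if a is inr y then Some y else None) w.

Definition shuffle (P1 : seq S1 -> Prop) (P2 : seq S2 -> Prop) : seq Sig -> Prop :=
  fun w => P1 (proj1w w) /\ P2 (proj2w w).

Definition well_nested (w : seq Sig) : Prop :=
  forall u a v b x, w = u ++ a :: v ++ b :: x ->
    is_call (skind a) -> is_ret (skind b) -> well_matched skind v ->
    side a = side b.

Definition wn (L : seq Sig -> Prop) : seq Sig -> Prop :=
  fun w => L w /\ well_nested w.

Definition indep_step (u v : seq Sig) : Prop :=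
  exists x a b y, u = x ++ a :: b :: y /\ v = x ++ b :: a :: y /\ side a != side b.

Inductive equivI : seq Sig -> seq Sig -> Prop :=
  | equivI_refl u : equivI u u
  | equivI_step u v : indep_step u v -> equivI u v
  | equivI_trans u v w : equivI u v -> equivI v w -> equivI u w.

Definition contextual_order (ord : seq Sig -> rel Sig) : Prop :=
  forall u,
    (forall a, ~~ ord u a a) /\
    (forall a b c, ord u a b -> ord u b c -> ord u a c) /\
    (forall a b, a != b -> ord u a b || ord u b a).

Definition ctx_le (ord : seq Sig -> rel Sig) (s r : seq Sig) : Prop :=
  prefix s r \/
  exists al a be b ga, s = al ++ a :: be /\ r = al ++ b :: ga /\ ord al a b.

Definition red (ord : seq Sig -> rel Sig) (L : seq Sig -> Prop) : seq Sig -> Prop :=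
  fun w => L w /\ forall u, L u -> equivI u w -> ctx_le ord u w -> u = w.

Definition coherent (ord : seq Sig -> rel Sig) : Prop :=
  forall u c, last_pending_call skind u c ->
    forall a r, side a = side c -> is_ret (skind r) -> side r != side c ->
      ord u a r.

End Shuffle.

From mathcomp Require Import all_boot zify.

(* Take a matched pair a ... b of w whose inner word v is well-matched and,
   by induction on |v|, well-nested, and suppose a and b lie in different
   components.  Projecting v on the component of a gives a well-matched word,
   so the call a is still pending in that projection after v; as P_i is
   well-matched, some letter a' of that component occurs after b, and we take
   the first one.  Then a is the last pending call of the prefix p = u a v,
   coherence gives a' <_p b, and commuting a' leftwards over b and the letters
   of the other component yields a word equivalent to w and strictly smaller
   than w, contradicting the reducedness of w. *)

Section WellMatched.
Context {S : finType} {kind : S -> letter_kind}.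
Local Notation wmf := (wm_from kind).

Lemma wm_from_cat m n {v y} : wmf m v -> wmf n y -> wmf (m + n) (v ++ y).
Proof.
elim: v m => [|c v IH] m /=; first by move/eqP->.
case: (kind c) => [Hv Hy|/andP[Hm Hv] Hy|Hv Hy].
- by rewrite -addSn; apply: IH.
- by case: m Hm Hv => // m _ Hv; apply: IH.
- exact: IH.
Qed.

Lemma wm_from_catr m n {v y} : wmf m v -> wmf (m + n) (v ++ y) -> wmf n y.
Proof.
elim: v m => [|c v IH] m /=; first by move/eqP->.
case: (kind c) => [Hv|/andP[Hm Hv] /andP[_]|Hv]; first exact: (IH m.+1).
  by case: m Hm Hv => // m _ Hv; apply: IH.
exact: IH.
Qed.

Lemma wm_from_suffix n v y : wmf n (v ++ y) -> exists m, wmf m y.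
Proof.
elim: v n => [|c v IH] n /=; first by exists n.
by case: (kind c) => [/IH|/andP[_ /IH]|/IH].
Qed.

Lemma wm_from_inj {m n v} : wmf m v -> wmf n v -> m = n.
Proof.
elim: v m n => [|c v IH] m n /=; first by move=> /eqP-> /eqP->.
case: (kind c) => [H1 H2|/andP[Hm H1] /andP[Hn H2]|]; last exact: IH.
  by case: (IH _ _ H1 H2).
by rewrite -(prednK Hm) -(prednK Hn) (IH _ _ H1 H2).
Qed.

Lemma wm_from_split_ret {n s} : wmf n.+1 s ->
  exists v b x, [/\ s = v ++ b :: x, well_matched kind v, kind b = Ret & wmf n x].
Proof.
elim: {s}(size s) {-2}s (leqnn (size s)) n => [|m IH] [|c s] //= Hs n.
case Ec: (kind c) => Hc.
- have [v1 [b1 [x1 [E1 Hv1 Hb1 Hx1]]]] := IH s Hs n.+1 Hc.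
  have Hsx1 : size x1 <= m by move: Hs; rewrite E1 size_cat /=; lia.
  have [v2 [b2 [x2 [E2 Hv2 Hb2 Hx2]]]] := IH x1 Hsx1 n Hx1.
  exists (c :: v1 ++ b1 :: v2), b2, x2; split => //.
    by rewrite E1 E2 /= -catA.
  by rewrite /well_matched /= Ec (wm_from_cat 0 1) //= Hb1.
- by exists [::], c, s.
- have [v [b [x [-> Hv Hb Hx]]]] := IH s Hs n Hc.
  by exists (c :: v), b, x; rewrite /well_matched /= Ec.
Qed.

Lemma pending_call_at_wm p c s :
  is_call (kind c) -> well_matched kind s -> pending_call_at kind p c s.
Proof.
move=> Hc Hs; split => // -[v [b [x [Es [Hb Hv]]]]].
move: Hs; rewrite /well_matched Es => /(wm_from_catr 0 0 Hv) /=.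
by case: (kind b) Hb.
Qed.

Lemma wm_from_not_pending n p c s : wmf n (c :: s) -> ~ pending_call_at kind p c s.
Proof.
move=> /= + [Hc []]; case: (kind c) Hc => // _ /wm_from_split_ret.
by move=> [v [b [x [Es Hv Hb _]]]]; exists v, b, x; rewrite Hb.
Qed.

Lemma last_pending_call_wm u {c v} :
  is_call (kind c) -> well_matched kind v -> last_pending_call kind (u ++ c :: v) c.
Proof.
move=> Hc Hv; exists u, v; split => //; split; first exact: pending_call_at_wm.
move=> p' c' s' Ev; move: Hv; rewrite /well_matched Ev.
by move=> /wm_from_suffix [n /wm_from_not_pending].
Qed.

End WellMatched.

Section Shuffle.
Variables (S1 S2 : finType) (k1 : S1 -> letter_kind) (k2 : S2 -> letter_kind).
Local Notation Sig := (Sig S1 S2).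
Local Notation sk := (skind k1 k2).
Local Notation well_nested := (well_nested k1 k2).

Definition side_part (s : bool) (w : seq Sig) := [seq c <- w | side c == s].

Lemma wm_from_side_part1 n w :
  wm_from sk n (side_part true w) = wm_from k1 n (proj1w w).
Proof.
rewrite /side_part /proj1w; elim: w n => [|[x|y] w IH] n //=.
by case: (k1 x); rewrite IH.
Qed.

Lemma wm_from_side_part2 n w :
  wm_from sk n (side_part false w) = wm_from k2 n (proj2w w).
Proof.
rewrite /side_part /proj2w; elim: w n => [|[x|y] w IH] n //=.
by case: (k2 y); rewrite IH.
Qed.

Lemma well_nested_infix y v z : well_nested (y ++ v ++ z) -> well_nested v.
Proof.
move=> Hw u a v' b x E; apply: (Hw (y ++ u) a v' b (x ++ z)).
by rewrite E -!catA /= -catA.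
Qed.

Lemma well_nested_wm_side_part s v :
  well_nested v -> well_matched sk v -> well_matched sk (side_part s v).
Proof.
elim: {v}(size v) {-2}v (leqnn (size v)) => [|n IH] [|c v] //= Hs Hn.
rewrite /well_matched /=; case Ec: (sk c) => Hv //.
- have [v1 [b [x [Ev Hv1 Hb Hx]]]] := wm_from_split_ret Hv.
  have Scb : side c = side b.
    by apply: (Hn [::] c v1 b x); rewrite ?Ev ?Ec ?Hb.
  have Hs1 : size v1 <= n.
    by rewrite -ltnS (leq_ltn_trans _ Hs) // Ev size_cat leq_addr.
  have Hsx : size x <= n.
    by rewrite -ltnS (leq_ltn_trans _ Hs) // Ev size_cat /= addnS ltnW // ltnS leq_addl.
  have Hn1 : well_nested v1.
    by apply: (well_nested_infix [:: c] _ (b :: x)); rewrite -Ev.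
  have Hnx : well_nested x.
    by apply: (well_nested_infix (c :: v1 ++ [:: b]) _ [::]); rewrite cats0 /= -catA -Ev.
  have := IH _ Hs1 Hn1 Hv1; have := IH _ Hsx Hnx Hx.
  rewrite Ev /side_part filter_cat /= -Scb; case: (side c == s) => /= Px Pv1.
    by rewrite Ec (wm_from_cat 0 1) //= Hb.
  exact: (wm_from_cat 0 0).
- have Hnv : well_nested v by apply: (well_nested_infix [:: c] _ [::]); rewrite cats0.
  by have := IH _ Hs Hnv Hv; case: (side c == s) => //=; rewrite Ec.
Qed.

Lemma well_nested_innermost w :
  (forall u a v b x, w = u ++ a :: v ++ b :: x ->
     is_call (sk a) -> is_ret (sk b) -> well_matched sk v -> well_nested v ->
     side a = side b) ->
  well_nested w.
Proof.
move=> Hw u a v; elim: {v}(size v) {-2}v (leqnn (size v)) u a => [|n IH] v Hs u a.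
  move=> b x Ew Ha Hb Hv.
  have Ev : v = [::] by case: v Hs {Ew Hv}.
  by apply: (Hw u a v b x) => //; rewrite Ev => -[|? ?] ? ? ? ?.
move=> b x Ew Ha Hb Hv; apply: (Hw u a v b x) => // u' a' v' b' x' Ev.
apply: (IH v' _ (u ++ a :: u') a' b' (x' ++ b :: x)).
  by move: Hs; rewrite Ev size_cat /= size_cat /=; lia.
by rewrite Ew Ev -!catA /= -!catA.
Qed.

Lemma has_side_after_pending_call u a v b x :
  is_call (sk a) -> side b != side a ->
  well_matched sk (side_part (side a) (u ++ a :: v ++ b :: x)) ->
  well_matched sk (side_part (side a) v) ->
  has (fun c => side c == side a) x.
Proof.
move=> Ha Hba Hw Hv; apply/negPn/negP; rewrite has_filter negbK => /eqP Hx.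
move: Hw; rewrite /side_part filter_cat /= eqxx filter_cat /= (negbTE Hba) Hx cats0.
move=> /wm_from_suffix [n] /=; case: (sk a) Ha => // _ Hn.
by have := wm_from_inj Hn Hv.
Qed.

Lemma equivI_move_left (p : seq Sig) a y z :
  ~~ has (fun c => side c == side a) y -> equivI (p ++ a :: y ++ z) (p ++ y ++ a :: z).
Proof.
elim: y p => [|c y IH] p /=; first by move=> _; apply: equivI_refl.
rewrite negb_or eq_sym => /andP[Hca Hy].
apply: (@equivI_trans _ _ _ (p ++ c :: a :: y ++ z)).
  by apply: equivI_step; exists p, a, c, (y ++ z).
by have := IH (rcons p c) Hy; rewrite -cats1 -!catA.
Qed.

Lemma equivI_proj {u v : seq Sig} :
  equivI u v -> proj1w u = proj1w v /\ proj2w u = proj2w v.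
Proof.
elim => // [{}u {}v [x [a [b [y [-> [-> Hab]]]]]]|u1 u2 u3 _ [-> ->] _ [-> ->]] //.
by rewrite /proj1w /proj2w !pmap_cat; case: a b Hab => ? [] ?.
Qed.

Section Reduced.
Variables (ord : seq Sig -> rel Sig) (P1 : seq S1 -> Prop) (P2 : seq S2 -> Prop).
Hypothesis ord_coherent : coherent k1 k2 ord.
Hypothesis P1_wm : forall w, P1 w -> well_matched k1 w.
Hypothesis P2_wm : forall w, P2 w -> well_matched k2 w.

Lemma shuffle_wm_side_part w s : shuffle P1 P2 w -> well_matched sk (side_part s w).
Proof.
rewrite /well_matched => -[Hw1 Hw2].
case: s; rewrite ?wm_from_side_part1 ?wm_from_side_part2.
  exact: P1_wm.
exact: P2_wm.
Qed.

Lemma red_matched_same_side w u a v b x :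
  red ord (shuffle P1 P2) w -> w = u ++ a :: v ++ b :: x ->
  is_call (sk a) -> is_ret (sk b) -> well_matched sk v -> well_nested v ->
  side a = side b.
Proof.
move=> [Lw Hred] Ew Ha Hb Hv Hnv.
have [//|] := eqVneq (side a) (side b); rewrite eq_sym => Hba; exfalso.
have Hx : has (fun c => side c == side a) x.
  apply: (has_side_after_pending_call u a v b x Ha Hba).
    by rewrite -Ew; apply: shuffle_wm_side_part.
  exact: well_nested_wm_side_part.
case: (split_find Hx) Ew => a' y z /eqP Ha' Hy Ew.
set p := u ++ a :: v.
have Hpa : ord p a' b := ord_coherent _ _ (last_pending_call_wm u Ha Hv) _ _ Ha' Hb Hba.
set u' := p ++ a' :: b :: y ++ z.
have Ew' : w = p ++ (b :: y) ++ a' :: z by rewrite Ew cat_rcons /p -catA.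
have Eu' : equivI u' w.
  by rewrite Ew'; apply: (equivI_move_left p a' (b :: y) z); rewrite /= Ha' negb_or Hba.
have Lu' : shuffle P1 P2 u'.
  by have [E1 E2] := equivI_proj Eu'; rewrite /shuffle E1 E2.
have Lt : ctx_le ord u' w by right; exists p, a', (b :: y ++ z), b, (y ++ a' :: z).
have := Hred u' Lu' Eu' Lt; rewrite Ew' => /(congr1 (drop (size p))).
rewrite !drop_size_cat // => -[Ea'b].
by move: Hba; rewrite -Ea'b Ha' eqxx.
Qed.

End Reduced.

End Shuffle.

Theorem proposition3p17 (S1 S2 : finType)
  (k1 : S1 -> letter_kind) (k2 : S2 -> letter_kind)
  (ord : seq (Sig S1 S2) -> rel (Sig S1 S2))
  (P1 : seq S1 -> Prop) (P2 : seq S2 -> Prop) :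
  contextual_order ord ->
  coherent k1 k2 ord ->
  is_VPL k1 P1 -> (forall w, P1 w -> well_matched k1 w) ->
  is_VPL k2 P2 -> (forall w, P2 w -> well_matched k2 w) ->
  forall w, red ord (shuffle P1 P2) w -> wn k1 k2 (shuffle P1 P2) w.
Proof.
move=> _ Hcoh _ HP1 _ HP2 w Hw; split; first exact: Hw.1.
by apply: well_nested_innermost => u a v b x Ew; apply: red_matched_same_side Hw Ew.
Qed.
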